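(* Let $(E,\mathcal{L},g)$ be a uniform affine oriented matroid with $|E|>1$ such that every maximal element of its bounded complex $\mathcal{L}^{++}$ is a tope of $\mathcal{L}$, and such that $X\backslash g\neq 0$ for every $X\in\mathcal{L}^+$. Then for $X\in\mathcal{L}^+$: $X\backslash g\in\mathcal{L}/g$ if and only if $X\notin\mathcal{L}^{++}$.
   Context: An oriented matroid $(E,\mathcal{L})$ is given by covectors $\mathcal{L}\subseteq\{+,-,0\}^E$ satisfying the standard covector axioms, ordered componentwise by $0<+$, $0<-$; topes are maximal covectors. Uniform: the underlying matroid (flats $z(X)=\{e:X_e=0\}$, $X\in\mathcal{L}$) of rank $r$ has every $r$-subset of $E$ as a basis. An affine oriented matroid $(E,\mathcal{L},g)$ has a distinguished non-loop $g\in E$; $\mathcal{L}^+=\{X\in\mathcal{L}:X_g=+\}$; bounded complex $\mathcal{L}^{++}=\{X\in\mathcal{L}^+:\ \text{all } 0\neq Y\le X \text{ in } \mathcal{L} \text{ have } Y_g=+\}$. For a sign vector $X\in\{+,-,0\}^E$, $X\backslash g$ denotes its restriction to $E\setminus\{g\}$. The contraction is $\mathcal{L}/g=\{Y\backslash g: Y\in\mathcal{L},\ Y_g=0\}$, an oriented matroid on $E\setminus\{g\}$. *)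

From HB Require Import structures.
From mathcomp Require Import all_boot.
Set Implicit Arguments. Unset Strict Implicit. Unset Printing Implicit Defensive.

Inductive sign := Zero | Plus | Minus.

Definition sign_enc (s : sign) : 'I_3 :=
  match s with Zero => inord 0 | Plus => inord 1 | Minus => inord 2 end.
Definition sign_dec (i : 'I_3) : option sign :=
  match val i with 0 => Some Zero | 1 => Some Plus | _ => Some Minus end.
Lemma sign_encK : pcancel sign_enc sign_dec.
Proof. by case; rewrite /sign_dec /= inordK. Qed.
HB.instance Definition _ := Finite.copy sign (pcan_type sign_encK).

Definition sopp (s : sign) : sign :=
  match s with Zero => Zero | Plus => Minus | Minus => Plus end.

Section OM.
Variable E : finType.
Definition svec := {ffun E -> sign}.

Definition szero : svec := [ffun => Zero].
Definition sneg (X : svec) : svec := [ffun e => sopp (X e)].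
Definition scomp (X Y : svec) : svec :=
  [ffun e => if X e == Zero then Y e else X e].
Definition ssep (X Y : svec) : {set E} :=
  [set e | (X e != Zero) && (Y e == sopp (X e))].
Definition zset (X : svec) : {set E} := [set e | X e == Zero].
Definition sle (Y X : svec) : bool := [forall e, (Y e == Zero) || (Y e == X e)].

Definition is_OM (L : {set svec}) : Prop :=
  [/\ szero \in L,
      (forall X, X \in L -> sneg X \in L),
      (forall X Y, X \in L -> Y \in L -> scomp X Y \in L) &
      (forall X Y e, X \in L -> Y \in L -> e \in ssep X Y ->
         exists2 Z, Z \in L & Z e = Zero /\
           forall f, f \notin ssep X Y -> Z f = scomp X Y f)].

(* underlying matroid: flats are the zero sets of covectors *)
Definition is_flat (L : {set svec}) (F : {set E}) : bool :=
  [exists X in L, zset X == F].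
Definition mclosure (L : {set svec}) (A : {set E}) : {set E} :=
  \bigcap_(F | is_flat L F && (A \subset F)) F.
Definition mindep (L : {set svec}) (I : {set E}) : bool :=
  [forall i in I, i \notin mclosure L (I :\ i)].
Definition mbasis (L : {set svec}) (B : {set E}) : bool :=
  mindep L B && [forall B' : {set E}, (B \proper B') ==> ~~ mindep L B'].
Definition uniform (L : {set svec}) : Prop :=
  exists r : nat, (exists B, mbasis L B /\ #|B| = r) /\
                  (forall B : {set E}, #|B| = r -> mbasis L B).

Definition is_tope (L : {set svec}) (X : svec) : Prop :=
  X \in L /\ forall Y, Y \in L -> sle X Y -> Y = X.

Definition nonloop (L : {set svec}) (g : E) : Prop := exists2 X, X \in L & X g != Zero.
Definition Lplus (L : {set svec}) (g : E) (X : svec) : Prop := X \in L /\ X g = Plus.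
Definition Lpp (L : {set svec}) (g : E) (X : svec) : Prop :=
  Lplus L g X /\ forall Y, Y \in L -> Y != szero -> sle Y X -> Y g = Plus.
Definition Lpp_maximal (L : {set svec}) (g : E) (X : svec) : Prop :=
  Lpp L g X /\ forall Y, Lpp L g Y -> sle X Y -> Y = X.
Definition restr_nonzero (g : E) (X : svec) : Prop := exists2 e, e != g & X e != Zero.
Definition in_contraction (L : {set svec}) (g : E) (X : svec) : Prop :=
  exists2 Y, Y \in L & Y g = Zero /\ forall e, e != g -> Y e = X e.
End OM.

(* In a uniform oriented matroid of rank r every sign vector lying above a
   nonzero covector is itself a covector: a nonzero covector Y has fewer than
   r zeros, so for a zero e of Y there is a covector vanishing on the other
   zeros of Y and with any prescribed sign at e, and composing Y with it
   fills in e.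
   Hence if X in L^+ is not in L^{++}, a nonzero covector Y <= X with Y_g = 0
   lifts to the covector that agrees with X off g and vanishes at g.
   Conversely such a covector lies below X, is nonzero because X\g is, and
   vanishes at g, so X is not in L^{++}. *)
From mathcomp Require Import all_boot.
Set Implicit Arguments. Unset Strict Implicit. Unset Printing Implicit Defensive.

(* The [eqType] structure of [sign] is transported through an encoding whose
   equality test does not reduce, so sign identities go through [sign_eqb]. *)
Definition sign_eqb (a b : sign) : bool :=
  match a, b with
  | Zero, Zero | Plus, Plus | Minus, Minus => true
  | _, _ => false
  end.

Lemma sign_eqE (a b : sign) : (a == b) = sign_eqb a b.
Proof. by apply/eqP/idP; case: a; case: b. Qed.

Lemma sopp_eq0 (s : sign) : (sopp s == Zero) = (s == Zero).
Proof. by rewrite !sign_eqE; case: s. Qed.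

Lemma sopp_neq (s : sign) : s != Zero -> sopp s != s.
Proof. by rewrite !sign_eqE; case: s. Qed.

Lemma nonzero_signP (s t : sign) : s != Zero -> t != Zero -> t = s \/ t = sopp s.
Proof. by rewrite !sign_eqE; case: s; case: t; auto. Qed.

Lemma subset_of_card (T : finType) (A : {set T}) k :
  k <= #|A| -> exists2 C : {set T}, C \subset A & #|C| = k.
Proof.
case/card_geqP => s [uniq_s <- sA]; exists [set x in s].
  by apply/subsetP => x; rewrite inE => /sA.
by rewrite cardsE; apply/card_uniqP.
Qed.

Section CovectorLemmas.
Variable E : finType.
Implicit Types (L : {set svec E}) (X Y W : svec E) (A : {set E}).

Lemma sleP Y X : reflect (forall e, Y e = Zero \/ Y e = X e) (sle Y X).
Proof.
apply: (iffP forallP) => H e; first by case/orP: (H e) => /eqP; auto.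
by case: (H e) => ->; rewrite eqxx ?orbT.
Qed.

Lemma svec_neq0P X : reflect (exists e, X e != Zero) (X != szero E).
Proof.
apply: (iffP idP) => [X0|[e Xe]]; last by apply: contraNneq Xe => ->; rewrite ffunE.
apply/existsP; apply: contraNT X0 => /existsPn X0.
by apply/eqP/ffunP => e; rewrite ffunE; apply/eqP/negbNE.
Qed.

Lemma mem_mclosureP L A x :
  reflect (forall W, W \in L -> A \subset zset W -> W x = Zero) (x \in mclosure L A).
Proof.
apply: (iffP bigcapP) => [H W WL AW|H F /andP[/existsP[W /andP[WL /eqP <-]] AW]].
  have := H (zset W); rewrite inE AW andbT => /(_ _) /eqP; apply.
  by apply/existsP; exists W; rewrite WL eqxx.
by rewrite inE; apply/eqP; apply: H.
Qed.

Lemma notin_mclosureP L A x : x \notin mclosure L A ->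
  exists2 W, W \in L & A \subset zset W /\ W x != Zero.
Proof.
move=> xA; have [/existsP[W /and3P[WL AW Wx]]|] :=
  boolP [exists W, [&& W \in L, A \subset zset W & W x != Zero]]; first by exists W.
move/existsPn => noW; case/negP: xA; apply/mem_mclosureP => W WL AW.
by apply/eqP; move: (noW W); rewrite WL AW /= negbK.
Qed.

Section OrientedMatroid.
Variable L : {set svec E}.
Hypothesis OM : is_OM L.

Lemma oriented_covector X e s : X \in L -> X e != Zero -> s != Zero ->
  exists2 X', X' \in L & X' e = s /\ zset X' = zset X.
Proof.
case: OM => _ Lneg _ _ XL Xe s0.
case: (nonzero_signP Xe s0) => ->; first by exists X.
exists (sneg X); first exact: Lneg.
by split; [rewrite ffunE | apply/setP => f; rewrite !inE ffunE sopp_eq0].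
Qed.

(* Eliminate y between V = V0 o W and W' o V, where V0 witnesses i outside
   cl(A), W vanishes on A + i, and W' = +-W is opposite to V at y. *)
Lemma mclosure_exchange A i y :
  i \notin mclosure L A -> i \in mclosure L (y |: A) -> y \in mclosure L (i |: A).
Proof.
case: OM => _ _ Lcomp Lelim /notin_mclosureP[V0 V0L [AV0 V0i]] /mem_mclosureP iyA.
apply/mem_mclosureP => W WL AiW; apply/eqP; apply: contraT => Wy.
have W0 f : f \in i |: A -> W f = Zero by move/(subsetP AiW); rewrite inE => /eqP.
pose V := scomp V0 W.
have VL : V \in L by apply: Lcomp.
have VA f : f \in A -> V f = Zero.
  move=> fA; move/subsetP: AV0 => /(_ f fA); rewrite inE /V ffunE => ->.
  by rewrite W0 // inE fA orbT.
have Vi : V i != Zero by rewrite /V ffunE (negbTE V0i).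
have Vy : V y != Zero by rewrite /V ffunE; case: ifP => // /negbT.
have oppVy : sopp (V y) != Zero by rewrite sopp_eq0.
have [W' W'L [W'y zW']] := oriented_covector WL Wy oppVy.
have W'0 f : W f = Zero -> W' f = Zero.
  move=> Wf; have : f \in zset W by rewrite inE Wf.
  by rewrite -zW' inE => /eqP.
pose Q := scomp W' V.
have yVQ : y \in ssep V Q by rewrite inE Vy /Q ffunE W'y (negbTE oppVy) eqxx.
have [Z ZL [Zy Z_off]] := Lelim _ _ _ VL (Lcomp _ _ W'L VL) yVQ.
have Qi : Q i = V i by rewrite /Q ffunE W'0 ?eqxx // W0 // setU11.
have Zi : Z i = V i.
  rewrite Z_off; first by rewrite ffunE (negbTE Vi).
  by rewrite inE Qi [_ == sopp _]eq_sym (negbTE (sopp_neq Vi)) andbF.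
suff : Z i = Zero by rewrite Zi => /eqP; rewrite (negbTE Vi).
apply: iyA ZL _; apply/subsetP => f; rewrite !inE => /predU1P[->|fA].
  by rewrite Zy.
have Qf : Q f = Zero by rewrite /Q ffunE W'0 ?eqxx ?VA // W0 // setU1r.
rewrite Z_off; first by rewrite ffunE VA // eqxx Qf.
by rewrite inE VA // eqxx.
Qed.

Lemma mclosure_basis B x : mbasis L B -> x \in mclosure L B.
Proof.
case/andP => indepB /forallP maxB; have [xB|xB] := boolP (x \in B).
  by apply/mem_mclosureP => W _ /subsetP /(_ x xB); rewrite inE => /eqP.
have : ~~ mindep L (x |: B) by apply: (implyP (maxB _)); rewrite properUr ?sub1set.
case/forall_inPn => j; rewrite !inE negbK => /predU1P[->|jB]; first by rewrite setU1K.
have jx : j != x by apply: contraNneq xB => <-.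
have -> : (x |: B) :\ j = x |: (B :\ j).
  by apply/setP => z; rewrite !inE; case: (z =P x) => // ->; rewrite eq_sym jx.
move/forall_inP: indepB => /(_ j jB) /mclosure_exchange.
by rewrite setD1K //; apply.
Qed.

Section Uniform.
Variable r : nat.
Hypothesis r_bases : forall B : {set E}, #|B| = r -> mbasis L B.
Hypothesis r_le_card : r <= #|E|.

Lemma covector_zset_card W : W \in L -> W != szero E -> #|zset W| < r.
Proof.
move=> WL; apply: contraNT; rewrite -leqNgt => /subset_of_card[B BW /r_bases Bbasis].
apply/eqP/ffunP => e; rewrite ffunE.
by move/mem_mclosureP: (mclosure_basis e Bbasis); apply.
Qed.

Lemma covector_separating A x : #|A| < r -> x \notin A ->
  exists2 U, U \in L & A \subset zset U /\ U x != Zero.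
Proof.
move=> Ar xA; set B0 := x |: A.
have B0r : #|B0| <= r by rewrite cardsU1 xA.
have : r - #|B0| <= #|~: B0| by rewrite leq_subLR cardsC.
case/subset_of_card => C CB0 Ccard.
have Br : #|B0 :|: C| = r.
  have /eqP -> : #|B0 :|: C| == #|B0| + #|C|.
    by rewrite (leq_card_setU _ _).2 disjoint_sym disjoints_subset.
  by rewrite Ccard subnKC.
have [indepB _] := andP (r_bases Br).
have xB : x \in B0 :|: C by rewrite !inE eqxx.
have [U UL [BU Ux]] := notin_mclosureP (forall_inP indepB x xB).
exists U => //; split => //; apply: subset_trans BU; apply/subsetP => z zA.
by rewrite !inE zA orbT andbT; apply: contraNneq xA => <-.
Qed.

Lemma covector_fill_zero Y e s : Y \in L -> Y != szero E -> Y e = Zero -> s != Zero ->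
  exists2 Y', Y' \in L & Y' e = s /\ forall f, f != e -> Y' f = Y f.
Proof.
move=> YL Y0 Ye s0.
have Ar : #|zset Y :\ e| < r.
  exact: leq_ltn_trans (subset_leq_card (subsetDl _ _)) (covector_zset_card YL Y0).
have [U0 U0L [AU0 U0e]] := covector_separating Ar (negbT (setD11 e (zset Y))).
have [U UL [Ue zU]] := oriented_covector U0L U0e s0.
case: OM => _ _ Lcomp _; exists (scomp Y U); first exact: Lcomp.
split=> [|f fe]; first by rewrite ffunE Ye eqxx.
rewrite ffunE; case: eqP => // /eqP Yf.
have : f \in zset U by rewrite zU; apply: (subsetP AU0); rewrite !inE fe.
by rewrite inE => /eqP ->; apply/esym/eqP.
Qed.

Lemma covector_above Y W : Y \in L -> Y != szero E -> sle Y W -> W \in L.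
Proof.
move=> YL Y0 YW; move cardD : #|[set e | Y e != W e]| => n.
elim: n Y YL Y0 YW cardD => [|n IH] Y YL Y0 /sleP YW cardD.
  suff <- : Y = W by [].
  apply/ffunP => e; apply/eqP; apply: contraTT isT => YWe.
  by move/eqP: cardD; rewrite cards_eq0 => /eqP/setP/(_ e); rewrite !inE YWe.
have /card_gt0P[e] : 0 < #|[set e | Y e != W e]| by rewrite cardD.
move=> eD; have YWe : Y e != W e by rewrite inE in eD.
have Ye : Y e = Zero by case: (YW e) => // /eqP; rewrite (negbTE YWe).
have We : W e != Zero by rewrite -Ye eq_sym.
have [Y' Y'L [Y'e Y'f]] := covector_fill_zero YL Y0 Ye We.
apply: (IH Y') => //.
- by apply/svec_neq0P; exists e; rewrite Y'e.
- apply/sleP => f; have [->|fe] := eqVneq f e; first by right.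
  by rewrite Y'f //; apply: YW.
- apply: succn_inj; rewrite -cardD (cardsD1 e [set e | Y e != W e]) eD add1n; congr _.+1.
  apply: eq_card => f; rewrite !inE.
  by have [->|fe] := eqVneq f e; rewrite ?Y'e ?eqxx ?Y'f.
Qed.

End Uniform.
End OrientedMatroid.
End CovectorLemmas.

Section AffineContraction.
Variables (E : finType) (L : {set svec E}) (g : E).
Implicit Types X Y : svec E.

Lemma contraction_not_Lpp X :
  restr_nonzero g X -> in_contraction L g X -> ~ Lpp L g X.
Proof.
case=> e eg Xe [Y YL [Yg YX]] [_ LppX].
have Y0 : Y != szero E by apply/svec_neq0P; exists e; rewrite YX.
have : sle Y X.
  by apply/sleP => f; have [->|fg] := eqVneq f g; [left | right; apply: YX].
by move/(LppX Y YL Y0); rewrite Yg.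
Qed.

Lemma not_Lpp_witness X : Lplus L g X -> ~ Lpp L g X ->
  exists2 Y, Y \in L & [/\ Y != szero E, sle Y X & Y g = Zero].
Proof.
move=> [XL Xg] notLpp.
have [/existsP[Y /and4P[YL Y0 YX Yg]]|] :=
  boolP [exists Y, [&& Y \in L, Y != szero E, sle Y X & Y g != Plus]].
  exists Y => //; split => //.
  by case: (sleP _ _ YX g) => // YgX; move: Yg; rewrite YgX Xg eqxx.
move/existsPn => noY; case: notLpp; split => // Y YL Y0 YX.
by apply/eqP; move: (noY Y); rewrite YL Y0 YX negbK.
Qed.

End AffineContraction.

Theorem corollary4p3 (E : finType) (L : {set svec E}) (g : E) :
  is_OM L -> uniform L -> nonloop L g -> 1 < #|E| ->
  (forall X, Lpp_maximal L g X -> is_tope L X) ->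
  (forall X, Lplus L g X -> restr_nonzero g X) ->
  forall X, Lplus L g X -> (in_contraction L g X <-> ~ Lpp L g X).
Proof.
(* Uniformity alone gives the equivalence. *)
move=> OM [r [[B [_ Br]] r_bases]] _ _ _ restr_nz X LplusX.
split; first exact/contraction_not_Lpp/restr_nz.
case/(not_Lpp_witness LplusX) => Y YL [Y0 YX Yg].
pose W := [ffun e => if e == g then Zero else X e].
have YW : sle Y W.
  apply/sleP => f; rewrite ffunE; have [->|_] := eqVneq f g; first by left.
  exact: (sleP _ _ YX).
have r_le_card : r <= #|E| by rewrite -Br max_card.
exists W; first exact: (covector_above OM r_bases r_le_card YL Y0 YW).
by split=> [|e eg]; rewrite ffunE ?eqxx ?(negbTE eg).
Qed.
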